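(* Let $G$ be the infinite king grid and let $C\subseteq\mathbb{Z}^2$ be a solid-locating-dominating code in $G$. Then for all $i,j\in\mathbb{Z}$, the set $T=\{(i,j),(i,j+1),(i,j+2),(i+1,j+2),(i-1,j+2)\}$ contains a codeword of $C$, and so does every set obtained from such a $T$ by a rotation of $\pi/2$, $\pi$ or $3\pi/2$ radians around the origin.
   Context: The infinite king grid $G=(V,E)$ has $V=\mathbb{Z}^2$, and distinct vertices $(u_1,u_2)$, $(v_1,v_2)$ are adjacent iff $|u_1-v_1|\le1$ and $|u_2-v_2|\le1$. $N[v]$ is the closed neighbourhood of $v$, and for a code (nonempty subset) $C\subseteq V$, $I(C;v)=N[v]\cap C$. A code $C$ is solid-locating-dominating if for all distinct $u,v\in V\setminus C$, $I(C;u)\setminus I(C;v)\ne\emptyset$. *)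

From Stdlib Require Import ZArith.
Open Scope Z_scope.

Definition vertex := (Z * Z)%type.

Definition closed_nbhd (v u : vertex) : Prop :=
  Z.abs (fst u - fst v) <= 1 /\ Z.abs (snd u - snd v) <= 1.

Definition code (C : vertex -> Prop) : Prop := exists c, C c.

Definition I_set (C : vertex -> Prop) (v : vertex) (w : vertex) : Prop :=
  closed_nbhd v w /\ C w.

Definition solid_locating_dominating (C : vertex -> Prop) : Prop :=
  code C /\
  forall u v : vertex, u <> v -> ~ C u -> ~ C v ->
    exists w, I_set C u w /\ ~ I_set C v w.

Definition rot90 (p : vertex) : vertex := (- snd p, fst p).

Definition T_set (i j : Z) (p : vertex) : Prop :=
  p = (i, j) \/ p = (i, j + 1) \/ p = (i, j + 2) \/
  p = (i + 1, j + 2) \/ p = (i - 1, j + 2).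

Definition rotated_T (k : nat) (i j : Z) (q : vertex) : Prop :=
  exists p, T_set i j p /\ q = Nat.iter k rot90 p.

(* The difference N[(i,j+1)] \ N[(i,j)] is the row {(i-1,j+2),(i,j+2),(i+1,j+2)}, so if
   neither (i,j) nor (i,j+1) is a codeword, the codeword separating them lies in T.
   The rotated sets follow by applying this to the pulled-back code p |-> C (rot^k p),
   which is again solid-locating-dominating because rotations are automorphisms of G. *)
From Stdlib Require Import ZArith Lia Classical.
Open Scope Z_scope.

Definition king_automorphism (f : vertex -> vertex) : Prop :=
  (forall x y, f x = f y -> x = y) /\
  (forall y, exists x, f x = y) /\
  (forall v u, closed_nbhd (f v) (f u) <-> closed_nbhd v u).

Lemma king_automorphism_id : king_automorphism (fun p => p).
Proof. split; [|split]; [auto | intros y; exists y; reflexivity | tauto]. Qed.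

Lemma king_automorphism_comp (f g : vertex -> vertex) :
  king_automorphism f -> king_automorphism g -> king_automorphism (fun p => f (g p)).
Proof.
  intros [f_inj [f_surj f_nbhd]] [g_inj [g_surj g_nbhd]].
  split; [|split].
  - intros x y E; exact (g_inj _ _ (f_inj _ _ E)).
  - intros z. destruct (f_surj z) as [y <-]. destruct (g_surj y) as [x <-]. eauto.
  - intros v u. rewrite f_nbhd. apply g_nbhd.
Qed.

Lemma king_automorphism_rot90 : king_automorphism rot90.
Proof.
  unfold king_automorphism, rot90, closed_nbhd. split; [|split].
  - intros [x1 x2] [y1 y2] E. injection E. intros. f_equal; lia.
  - intros [a b]. exists (b, - a). simpl. f_equal; lia.
  - intros [v1 v2] [u1 u2]. simpl. split; intros [N1 N2]; split; lia.
Qed.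

Lemma king_automorphism_iter_rot90 (k : nat) : king_automorphism (Nat.iter k rot90).
Proof.
  induction k as [|k IHk]; simpl.
  - exact king_automorphism_id.
  - exact (king_automorphism_comp _ _ king_automorphism_rot90 IHk).
Qed.

Lemma solid_locating_dominating_comp (C : vertex -> Prop) (f : vertex -> vertex) :
  king_automorphism f -> solid_locating_dominating C ->
  solid_locating_dominating (fun p => C (f p)).
Proof.
  intros [f_inj [f_surj f_nbhd]] [[c Cc] separating]. split.
  - destruct (f_surj c) as [x <-]. exists x; exact Cc.
  - intros u v uv Cu Cv.
    assert (fuv : f u <> f v) by (intro E; exact (uv (f_inj _ _ E))).
    destruct (separating _ _ fuv Cu Cv) as [w [[Nu Cw] not_Iv]].
    destruct (f_surj w) as [x <-].
    exists x. split.
    + split; [apply f_nbhd, Nu | exact Cw].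
    + intros [Nv _]. apply not_Iv. split; [apply f_nbhd, Nv | exact Cw].
Qed.

Lemma closed_nbhd_diff_in_T (i j : Z) (w : vertex) :
  closed_nbhd (i, j + 1) w -> ~ closed_nbhd (i, j) w -> T_set i j w.
Proof.
  destruct w as [a b]. unfold closed_nbhd, T_set. simpl. intros [Na Nb] Nij.
  assert (b = j + 2) by lia.
  assert (a = i - 1 \/ a = i \/ a = i + 1) as [-> | [-> | ->]] by lia;
    subst b; tauto.
Qed.

Lemma solid_locating_dominating_meets_T (C : vertex -> Prop) (i j : Z) :
  solid_locating_dominating C -> exists c, C c /\ T_set i j c.
Proof.
  intros [_ separating].
  destruct (classic (C (i, j + 1))) as [C1 | not_C1].
  { exists (i, j + 1). unfold T_set. tauto. }
  destruct (classic (C (i, j))) as [C0 | not_C0].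
  { exists (i, j). unfold T_set. tauto. }
  assert (neq : (i, j + 1) <> (i, j)) by (intro E; injection E; lia).
  destruct (separating _ _ neq not_C1 not_C0) as [w [[N1 Cw] not_I0]].
  exists w. split; [exact Cw |].
  apply closed_nbhd_diff_in_T; [exact N1 |].
  intros N0. exact (not_I0 (conj N0 Cw)).
Qed.

Theorem lemma10 (C : vertex -> Prop) :
  solid_locating_dominating C ->
  forall (k : nat) (i j : Z), (k < 4)%nat ->
    exists c, C c /\ rotated_T k i j c.
Proof.
  intros sld k i j _.
  destruct (solid_locating_dominating_meets_T (fun p => C (Nat.iter k rot90 p)) i j)
    as [p [Cp Tp]].
  { exact (solid_locating_dominating_comp C _ (king_automorphism_iter_rot90 k) sld). }
  exists (Nat.iter k rot90 p). split; [exact Cp |].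
  exists p. split; [exact Tp | reflexivity].
Qed.
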